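(* Let $G=(A\cup B,E)$ be a bipartite graph with $A=\{a_1,\dots,a_r\}$ and $B=\{b_1,\dots,b_s\}$. For each edge $(a_i,b_j)\in E$ let $L_{ij}$ be the L-frame with corner $(-i,-j)$ whose vertical segment joins $(-i,-j)$ to $(-i,0)$ and whose horizontal segment joins $(-i,-j)$ to $(0,-j)$. Let $G'$ be the graph on these L-frames in the edge intersection model. Then for every $k$, $G$ has an edge dominating set of size $k$ if and only if $G'$ has a dominating set of size $k$.
   Context: An L-frame is the union of a horizontal and a vertical segment sharing an endpoint (the corner). Edge intersection model: L-frames drawn on the integer grid are adjacent iff they share at least one grid edge. An edge dominating set of a graph is a set $S$ of edges such that every edge not in $S$ shares an endpoint with some edge of $S$. A dominating set is a vertex set such that every vertex outside it has a neighbour in it. *)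

From HB Require Import structures.
From mathcomp Require Import all_boot all_order all_algebra.
Set Implicit Arguments. Unset Strict Implicit. Unset Printing Implicit Defensive.
Import Order.TTheory GRing.Theory Num.Theory.
Local Open Scope ring_scope.

(* Unit edges of the integer grid:
   HE x y = the edge from (x,y) to (x+1,y);  VE x y = the edge from (x,y) to (x,y+1). *)
Inductive grid_edge : Type :=
| HE (x y : int)
| VE (x y : int).

Definition vseg (x y1 y2 : int) (g : grid_edge) : Prop :=
  exists y, g = VE x y /\ ((y1 <= y < y2) \/ (y2 <= y < y1)).

Definition hseg (y x1 x2 : int) (g : grid_edge) : Prop :=
  exists x, g = HE x y /\ ((x1 <= x < x2) \/ (x2 <= x < x1)).

Definition Lframe (cx cy vy hx : int) (g : grid_edge) : Prop :=
  vseg cx cy vy g \/ hseg cy cx hx g.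

Definition share_grid_edge (L1 L2 : grid_edge -> Prop) : Prop :=
  exists g, L1 g /\ L2 g.

(* Bipartite graph G with A = {a_1..a_r} (a_i ~ ordinal i-1 : 'I_r),
   B = {b_1..b_s} (b_j ~ ordinal j-1 : 'I_s), edge set E. *)

Definition Lij (r s : nat) (e : 'I_r * 'I_s) : grid_edge -> Prop :=
  let i : int := (e.1 : nat).+1%:Z in
  let j : int := (e.2 : nat).+1%:Z in
  Lframe (- i) (- j) 0 0.

Definition share_endpoint (r s : nat) (e f : 'I_r * 'I_s) : Prop :=
  e.1 = f.1 \/ e.2 = f.2.

Definition edge_dominating (r s : nat) (E S : {set 'I_r * 'I_s}) : Prop :=
  S \subset E /\
  forall e, e \in E -> e \notin S -> exists2 f, f \in S & share_endpoint e f.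

Definition Gprime_adj (r s : nat) (e f : 'I_r * 'I_s) : Prop :=
  e <> f /\ share_grid_edge (Lij e) (Lij f).

Definition dominating_Gprime (r s : nat) (E D : {set 'I_r * 'I_s}) : Prop :=
  D \subset E /\
  forall v, v \in E -> v \notin D -> exists2 u, u \in D & Gprime_adj u v.

From mathcomp Require Import all_boot all_order all_algebra.
From mathcomp Require Import zify.
Import Order.TTheory GRing.Theory Num.Theory.
Local Open Scope ring_scope.

(* [Lij e] covers only vertical unit edges in column [-(i+1)] and horizontal ones in
   row [-(j+1)], so frames of edges with no common endpoint are disjoint; since every
   arm reaches an axis, the unit edges just below and just left of the origin witness
   a common endpoint.  Hence G' is the line graph of G, and the two domination notions
   coincide set by set. *)

Lemma Lij_VE (r s : nat) (e : 'I_r * 'I_s) (x y : int) :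
  Lij e (VE x y) <-> x = - (e.1 : nat).+1%:Z /\ - (e.2 : nat).+1%:Z <= y < 0.
Proof.
rewrite /Lij /Lframe /vseg /hseg; split.
- by case=> [[y' [[-> ->] Hy]] | [x' [//]]]; split => //; lia.
- by case=> -> Hy; left; exists y; split => //; left.
Qed.

Lemma Lij_HE (r s : nat) (e : 'I_r * 'I_s) (x y : int) :
  Lij e (HE x y) <-> y = - (e.2 : nat).+1%:Z /\ - (e.1 : nat).+1%:Z <= x < 0.
Proof.
rewrite /Lij /Lframe /vseg /hseg; split.
- by case=> [[y' [//]] | [x' [[-> ->] Hx]]]; split => //; lia.
- by case=> -> Hx; right; exists x; split => //; left.
Qed.

Lemma share_Lij (r s : nat) (e f : 'I_r * 'I_s) :
  share_grid_edge (Lij e) (Lij f) <-> share_endpoint e f.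
Proof.
rewrite /share_grid_edge /share_endpoint; split.
- case=> -[x y|x y]; rewrite !(Lij_VE, Lij_HE) => -[[-> _] [Ef _]].
  + by right; apply: val_inj => /=; move: Ef; lia.
  + by left; apply: val_inj => /=; move: Ef; lia.
- case=> Ef.
  + by exists (VE (- (e.1 : nat).+1%:Z) (-1)); rewrite !Lij_VE Ef; split; lia.
  + by exists (HE (-1) (- (e.2 : nat).+1%:Z)); rewrite !Lij_HE Ef; split; lia.
Qed.

Lemma edge_dominating_Gprime (r s : nat) (E D : {set 'I_r * 'I_s}) :
  edge_dominating E D <-> dominating_Gprime E D.
Proof.
rewrite /edge_dominating /dominating_Gprime /Gprime_adj.
split=> -[subDE dom]; split=> // v vE vD; have [u uD adj_uv] := dom v vE vD.
- exists u => //; split; first by move=> euv; rewrite -euv uD in vD.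
  by apply/share_Lij; case: adj_uv => h; [left | right]; rewrite h.
- exists u => //; case: adj_uv => _ /share_Lij.
  by case=> h; [left | right]; rewrite h.
Qed.

Theorem mainTheorem14 (r s : nat) (E : {set 'I_r * 'I_s}) (k : nat) :
  (exists S : {set 'I_r * 'I_s}, edge_dominating E S /\ #|S| = k) <->
  (exists D : {set 'I_r * 'I_s}, dominating_Gprime E D /\ #|D| = k).
Proof.
by split=> -[S [domS cardS]]; exists S; split=> //; apply/edge_dominating_Gprime.
Qed.
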